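(* Each of the formulas D1 $=i(x,x)$, D2 $=i(i(x,x),i(n(x),n(x)))$, D3 $=i(i(x,x),i(i(y,y),i(i(x,y),i(x,y))))$ has a double-negation-free condensed-detachment proof from the axioms L1 $=i(i(x,y),i(i(y,z),i(x,z)))$, L2 $=i(i(n(x),x),x)$, L3 $=i(x,i(n(x),y))$.
   Context: Formulas are terms built from propositional variables using the binary connective $i$ (implication) and the unary connective $n$ (negation). Condensed detachment: from a major premiss $i(A,B)$ and a minor premiss $C$, after renaming variables so that the two premisses share no variables, if $A$ and $C$ are unifiable with most general unifier $\sigma$, infer $B\sigma$; alphabetic variants of axioms count as axioms and conclusions may be renamed. A proof is double-negation free if none of its deduced (non-axiom) steps has a subformula of the form $n(n(t))$. *)

From Stdlib Require Import List Arith.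
Import ListNotations.

Inductive form : Type :=
| V : nat -> form
| I : form -> form -> form
| N : form -> form.

Fixpoint subst (s : nat -> form) (f : form) : form :=
  match f with
  | V k => s k
  | I a b => I (subst s a) (subst s b)
  | N a => N (subst s a)
  end.

Definition renaming (r : nat -> nat) : Prop := forall m n, r m = r n -> m = n.
Definition rename (r : nat -> nat) (f : form) : form := subst (fun k => V (r k)) f.

Fixpoint occurs (k : nat) (f : form) : Prop :=
  match f with
  | V m => m = k
  | I a b => occurs k a \/ occurs k b
  | N a => occurs k a
  end.

Definition unifier (s : nat -> form) (a b : form) : Prop := subst s a = subst s b.

Definition mgu (s : nat -> form) (a b : form) : Prop :=
  unifier s a b /\
  forall t, unifier t a b -> exists r, forall k, t k = subst r (s k).

(** Condensed detachment: from major [maj] = i(A,B) and minor [min]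
    (renamed apart), with mgu s of A and min, infer B s (up to renaming). *)
Definition cd (maj min concl : form) : Prop :=
  exists (r1 r2 r3 : nat -> nat) (s : nat -> form) (A B : form),
    renaming r1 /\ renaming r2 /\ renaming r3 /\
    rename r1 maj = I A B /\
    (forall k, occurs k (rename r1 maj) -> ~ occurs k (rename r2 min)) /\
    mgu s A (rename r2 min) /\
    concl = rename r3 (subst s B).

Definition x := V 0.
Definition y := V 1.
Definition z := V 2.

Definition L1 := I (I x y) (I (I y z) (I x z)).
Definition L2 := I (I (N x) x) x.
Definition L3 := I x (I (N x) y).

Definition D1 := I x x.
Definition D2 := I (I x x) (I (N x) (N x)).
Definition D3 := I (I x x) (I (I y y) (I (I x y) (I x y))).

Definition is_axiom (f : form) : Prop :=
  exists r ax, renaming r /\ (ax = L1 \/ ax = L2 \/ ax = L3) /\ f = rename r ax.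

(** Justification of a proof line: axiom, or CD with major line i and minor line j. *)
Inductive just : Type :=
| Ax : just
| Det : nat -> nat -> just.

Definition proof := list (form * just).

Definition valid_proof (p : proof) : Prop :=
  forall k e, nth_error p k = Some e ->
    match snd e with
    | Ax => is_axiom (fst e)
    | Det i j => i < k /\ j < k /\
        exists a b, nth_error p i = Some a /\ nth_error p j = Some b /\
                    cd (fst a) (fst b) (fst e)
    end.

Definition concludes (p : proof) (f : form) : Prop :=
  exists jf, nth_error p (length p - 1) = Some (f, jf).

Fixpoint has_nn (f : form) : Prop :=
  match f with
  | V _ => False
  | I a b => has_nn a \/ has_nn b
  | N a => (match a with N _ => True | _ => False end) \/ has_nn a
  end.

Definition dn_free (p : proof) : Prop :=
  forall k e, nth_error p k = Some e -> snd e <> Ax -> ~ has_nn (fst e).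

Definition dnf_cd_provable (f : form) : Prop :=
  exists p, valid_proof p /\ concludes p f /\ dn_free p.

(* Each derivation is given as a skeleton of justifications (an axiom, or the
   indices of the major and minor premiss) and replayed by computation: the
   conclusion of a detachment is obtained by Robinson unification, proved to
   return a most general unifier, and renamed with variables numbered by first
   occurrence, so the replayed last line is literally D1, D2 or D3. *)

From Stdlib Require Import List Arith Bool Lia.
Import ListNotations.

Definition form_eq_dec (a b : form) : {a = b} + {a <> b}.
Proof. decide equality; apply Nat.eq_dec. Defined.

Lemma subst_ext (s t : nat -> form) (f : form) :
  (forall k, s k = t k) -> subst s f = subst t f.
Proof. intros H; induction f; simpl; congruence. Qed.

Lemma subst_comp (s t : nat -> form) (f : form) :
  subst t (subst s f) = subst (fun k => subst t (s k)) f.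
Proof. induction f; simpl; congruence. Qed.

Lemma rename_id (f : form) : rename (fun k => k) f = f.
Proof. unfold rename; induction f; simpl; congruence. Qed.

Fixpoint occursb (k : nat) (f : form) : bool :=
  match f with
  | V m => m =? k
  | I a b => occursb k a || occursb k b
  | N a => occursb k a
  end.

Definition bind (k : nat) (u : form) : nat -> form :=
  fun j => if j =? k then u else V j.

Lemma subst_bind_notin (k : nat) (u f : form) :
  occursb k f = false -> subst (bind k u) f = f.
Proof.
  induction f as [m | a IHa b IHb | a IHa]; simpl; intros H.
  - unfold bind; rewrite H; reflexivity.
  - apply orb_false_iff in H as [Ha Hb]; rewrite IHa, IHb; auto.
  - rewrite IHa; auto.
Qed.

Lemma subst_bind_fixed (t : nat -> form) (k : nat) (u : form) :
  t k = subst t u -> forall j, subst t (bind k u j) = t j.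
Proof.
  intros Hk j; unfold bind.
  destruct (Nat.eqb_spec j k); [subst; auto | reflexivity].
Qed.

Definition unifies (t : nat -> form) (E : list (form * form)) : Prop :=
  Forall (fun e => subst t (fst e) = subst t (snd e)) E.

(* Most general in the idempotent sense: every unifier [t] equals [t o s]. *)
Definition mgu_eqs (s : nat -> form) (E : list (form * form)) : Prop :=
  unifies s E /\ forall t, unifies t E -> forall k, t k = subst t (s k).

Definition subst_eqs (s : nat -> form) (E : list (form * form)) : list (form * form) :=
  map (fun e => (subst s (fst e), subst s (snd e))) E.

Lemma unifies_ext (t t' : nat -> form) (E : list (form * form)) :
  (forall k, t k = t' k) -> unifies t E -> unifies t' E.
Proof.
  intros Ht; apply Forall_impl; intros e He.
  rewrite <- !(subst_ext _ _ _ Ht); exact He.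
Qed.

Lemma unifies_subst_eqs (t s : nat -> form) (E : list (form * form)) :
  unifies t (subst_eqs s E) <-> unifies (fun k => subst t (s k)) E.
Proof.
  unfold unifies, subst_eqs; rewrite Forall_map.
  split; apply Forall_impl; intros e; simpl; rewrite !subst_comp; auto.
Qed.

Lemma mgu_eqs_equiv (s : nat -> form) (E E' : list (form * form)) :
  (forall t, unifies t E <-> unifies t E') -> mgu_eqs s E' -> mgu_eqs s E.
Proof.
  intros HE [Hs Hgen]; split; [apply HE; exact Hs|].
  intros t Ht; apply Hgen, HE, Ht.
Qed.

Lemma unifies_swap (t : nat -> form) (a b : form) (E : list (form * form)) :
  unifies t ((a, b) :: E) <-> unifies t ((b, a) :: E).
Proof. unfold unifies; rewrite !Forall_cons_iff; simpl; intuition. Qed.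

Lemma unifies_decomp_I (t : nat -> form) (a1 a2 b1 b2 : form) E :
  unifies t ((I a1 a2, I b1 b2) :: E) <-> unifies t ((a1, b1) :: (a2, b2) :: E).
Proof.
  unfold unifies; rewrite !Forall_cons_iff; simpl.
  split; [intros [Hab HE]; injection Hab; auto | intros (H1 & H2 & HE); split; congruence].
Qed.

Lemma unifies_decomp_N (t : nat -> form) (a b : form) E :
  unifies t ((N a, N b) :: E) <-> unifies t ((a, b) :: E).
Proof.
  unfold unifies; rewrite !Forall_cons_iff; simpl.
  split; [intros [Hab HE]; injection Hab; auto | intros [H HE]; split; congruence].
Qed.

Lemma unifies_trivial (t : nat -> form) (a : form) E :
  unifies t ((a, a) :: E) <-> unifies t E.
Proof. unfold unifies; rewrite Forall_cons_iff; simpl; tauto. Qed.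

Lemma mgu_eqs_nil : mgu_eqs V [].
Proof. split; [constructor | reflexivity]. Qed.

(* Eliminating [k := u] is sound without an occurs check for generality;
   the occurs check is what makes the composed substitution a unifier. *)
Lemma mgu_eqs_eliminate (k : nat) (u : form) (E : list (form * form)) (s : nat -> form) :
  occursb k u = false -> mgu_eqs s (subst_eqs (bind k u) E) ->
  mgu_eqs (fun j => subst s (bind k u j)) ((V k, u) :: E).
Proof.
  intros Hocc [Hs Hgen]; split.
  - constructor; simpl.
    + unfold bind at 1; rewrite Nat.eqb_refl.
      rewrite <- subst_comp, subst_bind_notin; auto.
    + apply unifies_subst_eqs, Hs.
  - intros t Ht j.
    apply Forall_cons_iff in Ht as [Hk HE]; simpl in Hk.
    assert (Htb := subst_bind_fixed t k u Hk).
    assert (Hts : forall i, t i = subst t (s i)).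
    { apply Hgen, unifies_subst_eqs.
      apply (unifies_ext t); [intros i; symmetry; apply Htb | exact HE]. }
    rewrite subst_comp, <- (subst_ext _ _ _ Hts); symmetry; apply Htb.
Qed.

Definition unify_var (rec : list (form * form) -> option (nat -> form))
    (k : nat) (u : form) (E : list (form * form)) : option (nat -> form) :=
  if form_eq_dec u (V k) then rec E
  else if occursb k u then None
  else option_map (fun s j => subst s (bind k u j)) (rec (subst_eqs (bind k u) E)).

Fixpoint unify (fuel : nat) (E : list (form * form)) : option (nat -> form) :=
  match fuel with
  | 0 => None
  | S fuel =>
      match E with
      | [] => Some V
      | (I a1 a2, I b1 b2) :: E => unify fuel ((a1, b1) :: (a2, b2) :: E)
      | (N a, N b) :: E => unify fuel ((a, b) :: E)
      | (V k, u) :: E | (u, V k) :: E => unify_var (unify fuel) k u E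
      | _ => None
      end
  end.

Lemma unify_var_sound (rec : list (form * form) -> option (nat -> form))
    (k : nat) (u : form) (E : list (form * form)) (s : nat -> form) :
  (forall E s, rec E = Some s -> mgu_eqs s E) ->
  unify_var rec k u E = Some s -> mgu_eqs s ((V k, u) :: E).
Proof.
  intros Hrec; unfold unify_var.
  destruct (form_eq_dec u (V k)) as [-> | _].
  - intros H; apply (mgu_eqs_equiv s _ E); [intros t; apply unifies_trivial | auto].
  - destruct (occursb k u) eqn:Hocc; [discriminate|].
    destruct (rec (subst_eqs (bind k u) E)) as [s'|] eqn:Hs'; [|discriminate].
    intros H; injection H as <-.
    apply mgu_eqs_eliminate; auto.
Qed.

Lemma unify_sound (fuel : nat) (E : list (form * form)) (s : nat -> form) :
  unify fuel E = Some s -> mgu_eqs s E.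
Proof.
  revert E s; induction fuel as [|fuel IH]; intros E s H; [discriminate|].
  destruct E as [|[a b] E]; simpl in H.
  { injection H as <-; apply mgu_eqs_nil. }
  destruct a as [k | a1 a2 | a], b as [m | b1 b2 | b];
    try discriminate; try (eapply unify_var_sound; eauto; fail);
    try (eapply mgu_eqs_equiv; [intros t; apply unifies_swap|];
         eapply unify_var_sound; eauto; fail).
  - eapply mgu_eqs_equiv; [intros t; apply unifies_decomp_I | eauto].
  - eapply mgu_eqs_equiv; [intros t; apply unifies_decomp_N | eauto].
Qed.

Lemma mgu_of_mgu_eqs (s : nat -> form) (a b : form) : mgu_eqs s [(a, b)] -> mgu s a b.
Proof.
  intros [Hs Hgen]; split.
  - apply Forall_inv in Hs; exact Hs.
  - intros t Ht; exists t; apply Hgen; constructor; auto.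
Qed.

Fixpoint position (k : nat) (l : list nat) : option nat :=
  match l with
  | [] => None
  | m :: l => if m =? k then Some 0 else option_map S (position k l)
  end.

Lemma position_nth_error (k : nat) (l : list nat) (i : nat) :
  position k l = Some i -> nth_error l i = Some k.
Proof.
  revert i; induction l as [|m l IH]; simpl; intros i H; [discriminate|].
  destruct (Nat.eqb_spec m k) as [-> | _]; [injection H as <-; reflexivity|].
  destruct (position k l) as [i'|]; [|discriminate].
  injection H as <-; apply IH; reflexivity.
Qed.

(* Unlisted variables are shifted past [length l], so the map is injective. *)
Definition renaming_along (l : list nat) (k : nat) : nat :=
  match position k l with Some i => i | None => length l + k end.

Lemma renaming_along_inj (l : list nat) : renaming (renaming_along l).
Proof.
  intros m n; unfold renaming_along.
  destruct (position m l) as [i|] eqn:Hm, (position n l) as [j|] eqn:Hn; intros E.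
  - subst j; apply position_nth_error in Hm, Hn; congruence.
  - apply position_nth_error in Hm.
    assert (i < length l) by (apply nth_error_Some; congruence); lia.
  - apply position_nth_error in Hn.
    assert (j < length l) by (apply nth_error_Some; congruence); lia.
  - lia.
Qed.

Fixpoint vars_from (f : form) (acc : list nat) : list nat :=
  match f with
  | V k => if existsb (Nat.eqb k) acc then acc else acc ++ [k]
  | I a b => vars_from b (vars_from a acc)
  | N a => vars_from a acc
  end.

Definition canon (f : form) : form := rename (renaming_along (vars_from f [])) f.

Fixpoint maxv (f : form) : nat :=
  match f with V k => k | I a b => Nat.max (maxv a) (maxv b) | N a => maxv a end.

Lemma occurs_le_maxv (k : nat) (f : form) : occurs k f -> k <= maxv f.
Proof. induction f; simpl; intros H; [lia | destruct H; [apply IHf1 in H | apply IHf2 in H]; lia | auto]. Qed.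

Lemma occurs_rename_shift (k o : nat) (f : form) :
  occurs k (rename (fun j => j + o) f) -> o <= k.
Proof. unfold rename; induction f; simpl; intros H; [lia | destruct H; auto | auto]. Qed.

Definition unify_fuel : nat := 1000.

Definition cd_conclusion (maj min : form) : option form :=
  match maj with
  | I A B =>
      match unify unify_fuel [(A, rename (fun j => j + S (maxv maj)) min)] with
      | Some s => Some (canon (subst s B))
      | None => None
      end
  | _ => None
  end.

Lemma cd_conclusion_sound (maj min c : form) : cd_conclusion maj min = Some c -> cd maj min c.
Proof.
  unfold cd_conclusion; destruct maj as [|A B|]; try discriminate.
  set (o := S (maxv (I A B))).
  destruct (unify _ _) as [s|] eqn:Hs; [|discriminate].
  intros H; injection H as <-.
  exists (fun j => j), (fun j => j + o), (renaming_along (vars_from (subst s B) [])), s, A, B.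
  split; [intros m n; auto|].
  split; [intros m n; lia|].
  split; [apply renaming_along_inj|].
  split; [apply rename_id|].
  split; [|split; [apply (mgu_of_mgu_eqs s), (unify_sound unify_fuel), Hs | reflexivity]].
  intros k Hmaj Hmin; rewrite rename_id in Hmaj.
  apply occurs_le_maxv in Hmaj; apply occurs_rename_shift in Hmin; unfold o in Hmin; lia.
Qed.

Definition axiom_listed (f : form) : bool :=
  existsb (fun a => if form_eq_dec f a then true else false) [L1; L2; L3].

Lemma axiom_listed_sound (f : form) : axiom_listed f = true -> is_axiom f.
Proof.
  unfold axiom_listed; intros H; apply existsb_exists in H as [a [Ha Hf]].
  destruct (form_eq_dec f a) as [-> | _]; [|discriminate].
  exists (fun j => j), a; split; [intros m n; auto | split; [|symmetry; apply rename_id]].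
  simpl in Ha; intuition.
Qed.

Inductive step : Type :=
| Use (ax : form)
| Detach (i j : nat).

Fixpoint replay (p : proof) (ss : list step) : option proof :=
  match ss with
  | [] => Some p
  | Use a :: ss => if axiom_listed a then replay (p ++ [(a, Ax)]) ss else None
  | Detach i j :: ss =>
      match nth_error p i, nth_error p j with
      | Some (a, _), Some (b, _) =>
          match cd_conclusion a b with
          | Some c => replay (p ++ [(c, Det i j)]) ss
          | None => None
          end
      | _, _ => None
      end
  end.

Lemma valid_proof_nil : valid_proof [].
Proof. intros [|k] e H; discriminate. Qed.

Lemma valid_proof_snoc (p : proof) (e : form * just) :
  valid_proof p ->
  match snd e with
  | Ax => is_axiom (fst e)
  | Det i j => i < length p /\ j < length p /\
      exists a b, nth_error p i = Some a /\ nth_error p j = Some b /\ cd (fst a) (fst b) (fst e)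
  end ->
  valid_proof (p ++ [e]).
Proof.
  intros Hp He k e' Hk.
  destruct (Nat.lt_ge_cases k (length p)) as [Hlt | Hge].
  - rewrite nth_error_app1 in Hk by exact Hlt.
    specialize (Hp k e' Hk); destruct (snd e') as [|i j]; [exact Hp|].
    destruct Hp as (Hi & Hj & a & b & Ha & Hb & Hcd).
    split; [lia | split; [lia|]].
    exists a, b; rewrite !nth_error_app1 by lia; auto.
  - rewrite nth_error_app2 in Hk by exact Hge.
    destruct (k - length p) as [|n] eqn:Hk0; [|destruct n; discriminate].
    injection Hk as <-; destruct (snd e) as [|i j]; [exact He|].
    destruct He as (Hi & Hj & a & b & Ha & Hb & Hcd).
    split; [lia | split; [lia|]].
    exists a, b; rewrite !nth_error_app1 by lia; auto.
Qed.

Lemma replay_valid (ss : list step) (p q : proof) :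
  valid_proof p -> replay p ss = Some q -> valid_proof q.
Proof.
  revert p; induction ss as [|[a | i j] ss IH]; simpl; intros p Hp H.
  - injection H as <-; exact Hp.
  - destruct (axiom_listed a) eqn:Ha; [|discriminate].
    apply (IH _ (valid_proof_snoc p (a, Ax) Hp (axiom_listed_sound a Ha)) H).
  - destruct (nth_error p i) as [[a ja]|] eqn:Hi; [|discriminate].
    destruct (nth_error p j) as [[b jb]|] eqn:Hj; [|discriminate].
    destruct (cd_conclusion a b) as [c|] eqn:Hc; [|discriminate].
    apply (IH (p ++ [(c, Det i j)])); [|exact H].
    apply valid_proof_snoc; [exact Hp|]; simpl.
    split; [apply nth_error_Some; congruence|].
    split; [apply nth_error_Some; congruence|].
    exists (a, ja), (b, jb); auto using cd_conclusion_sound.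
Qed.

Fixpoint has_nnb (f : form) : bool :=
  match f with
  | V _ => false
  | I a b => has_nnb a || has_nnb b
  | N a => match a with N _ => true | _ => false end || has_nnb a
  end.

Lemma has_nnb_false (f : form) : has_nnb f = false -> ~ has_nn f.
Proof.
  induction f as [k | a IHa b IHb | a IHa]; simpl; intros H.
  - tauto.
  - apply orb_false_iff in H as [Ha Hb]; intros [Hn | Hn]; [apply IHa | apply IHb]; auto.
  - apply orb_false_iff in H as [Hnn Ha].
    intros [Hn | Hn]; [destruct a; discriminate + contradiction | apply IHa; auto].
Qed.

Definition dn_freeb (p : proof) : bool :=
  forallb (fun e => match snd e with Ax => true | Det _ _ => negb (has_nnb (fst e)) end) p.

Lemma dn_freeb_sound (p : proof) : dn_freeb p = true -> dn_free p.
Proof.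
  intros H k e Hk Hax.
  apply nth_error_In, (proj1 (forallb_forall _ p) H) in Hk.
  destruct (snd e); [contradiction | apply has_nnb_false, negb_true_iff, Hk].
Qed.

Definition certifies (ss : list step) (f : form) : bool :=
  match replay [] ss with
  | Some p =>
      dn_freeb p &&
      match nth_error p (length p - 1) with
      | Some (g, _) => if form_eq_dec g f then true else false
      | None => false
      end
  | None => false
  end.

Lemma certifies_sound (ss : list step) (f : form) :
  certifies ss f = true -> dnf_cd_provable f.
Proof.
  unfold certifies; destruct (replay [] ss) as [p|] eqn:Hp; [|discriminate].
  intros H; apply andb_prop in H as [Hdn Hlast].
  exists p; split; [apply (replay_valid ss []); [apply valid_proof_nil | exact Hp]|].
  split; [|apply dn_freeb_sound, Hdn].
  destruct (nth_error p (length p - 1)) as [[g jg]|] eqn:Hg; [|discriminate].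
  destruct (form_eq_dec g f) as [<- | _]; [exists jg; exact Hg | discriminate].
Qed.

Definition D1_derivation : list step :=
  [ Use L1; Use L3; Detach 0 1; Use L2; Detach 2 3 ].

Definition D2_derivation : list step :=
  [ Use L1; Use L2; Detach 0 1; Use L3; Detach 0 3; Detach 4 1; Detach 0 5;
    Detach 2 6; Detach 3 5; Detach 0 8; Detach 9 2; Detach 1 10; Detach 4 11;
    Detach 0 12; Detach 13 9; Detach 4 9; Detach 0 15; Detach 16 7;
    Detach 14 17; Detach 7 18; Detach 0 17; Detach 20 4; Detach 19 21;
    Detach 0 21; Detach 0 20; Detach 24 7; Detach 19 20; Detach 26 9;
    Detach 22 27; Detach 25 28; Detach 0 29; Detach 23 30; Detach 22 31;
    Detach 0 32; Detach 0 9; Detach 2 19; Detach 34 35; Detach 33 36 ].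

Definition D3_derivation : list step :=
  [ Use L1; Detach 0 0; Detach 1 1; Use L3; Detach 0 3; Use L2; Detach 4 5;
    Detach 0 6; Detach 0 7; Detach 0 8; Detach 1 9; Detach 3 6; Detach 0 11;
    Detach 4 12; Detach 0 13; Detach 0 5; Detach 15 7; Detach 14 16;
    Detach 2 17; Detach 1 0; Detach 19 17; Detach 20 5; Detach 18 21;
    Detach 2 22; Detach 23 23; Detach 24 24; Detach 10 17; Detach 26 8;
    Detach 2 27; Detach 25 28; Detach 9 0; Detach 30 18; Detach 23 31;
    Detach 32 32; Detach 29 33; Detach 12 7; Detach 0 35; Detach 26 26;
    Detach 36 37; Detach 16 38; Detach 1 25; Detach 39 40; Detach 25 41;
    Detach 18 37; Detach 2 43; Detach 25 44; Detach 1 37; Detach 2 46;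
    Detach 23 47; Detach 48 48; Detach 1 49; Detach 50 40; Detach 45 51;
    Detach 42 52; Detach 31 2; Detach 53 54; Detach 34 55; Detach 10 56;
    Detach 31 10; Detach 40 58; Detach 59 39; Detach 31 40; Detach 60 61;
    Detach 57 62; Detach 2 63; Detach 40 32; Detach 1 65; Detach 1 66;
    Detach 67 55; Detach 1 68; Detach 30 69; Detach 2 56; Detach 30 71;
    Detach 1 53; Detach 61 73; Detach 1 74; Detach 72 75; Detach 70 76;
    Detach 64 77; Detach 2 78; Detach 1 75; Detach 70 80; Detach 64 81;
    Detach 79 82 ].

Theorem lemma5 : dnf_cd_provable D1 /\ dnf_cd_provable D2 /\ dnf_cd_provable D3.
Proof.
  split; [|split].
  - apply (certifies_sound D1_derivation); vm_compute; reflexivity.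
  - apply (certifies_sound D2_derivation); vm_compute; reflexivity.
  - apply (certifies_sound D3_derivation); vm_compute; reflexivity.
Qed.
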